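(* Let $(\mathfrak g,[\cdot,\cdot],\alpha,\varepsilon)$ be a color Hom-Lie algebra and $\theta$ an even element of the centroid of $\mathfrak g$. Define even brackets $[x,y]_1^\theta=[\theta(x),y]$ and $[x,y]_2^\theta=[\theta(x),\theta(y)]$. Then each of the following is a color Hom-Lie algebra: (i) $(\mathfrak g,[\cdot,\cdot],\theta\circ\alpha,\varepsilon)$, $(\mathfrak g,[\cdot,\cdot]_1^\theta,\theta\circ\alpha,\varepsilon)$, $(\mathfrak g,[\cdot,\cdot]_2^\theta,\theta\circ\alpha,\varepsilon)$; (ii) $(\mathfrak g,[\cdot,\cdot],\alpha\circ\theta,\varepsilon)$, $(\mathfrak g,[\cdot,\cdot]_1^\theta,\alpha\circ\theta,\varepsilon)$, $(\mathfrak g,[\cdot,\cdot]_2^\theta,\alpha\circ\theta,\varepsilon)$.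
   Context: $\mathbb K$ is a field of characteristic zero and $\Gamma$ an abelian group. A bicharacter is a map $\varepsilon:\Gamma\times\Gamma\to\mathbb K\setminus\{0\}$ with $\varepsilon(a,b)\varepsilon(b,a)=1$, $\varepsilon(a,b+c)=\varepsilon(a,b)\varepsilon(a,c)$, $\varepsilon(a+b,c)=\varepsilon(a,c)\varepsilon(b,c)$; for homogeneous $x,y$, $\varepsilon(x,y)$ means $\varepsilon(\deg x,\deg y)$. Even maps preserve degree. A color Hom-Lie algebra $(\mathfrak g,[\cdot,\cdot],\alpha,\varepsilon)$ is a $\Gamma$-graded vector space with even bilinear bracket and even linear $\alpha$ such that, for homogeneous $x,y,z$, $[x,y]=-\varepsilon(x,y)[y,x]$ and $\varepsilon(z,x)[\alpha(x),[y,z]]+\varepsilon(x,y)[\alpha(y),[z,x]]+\varepsilon(y,z)[\alpha(z),[x,y]]=0$. The centroid of $\mathfrak g$ is the set of homogeneous linear maps $\theta:\mathfrak g\to\mathfrak g$ (and their sums) with $\theta([x,y])=[\theta(x),y]=\varepsilon(\theta,x)[x,\theta(y)]$ for all homogeneous $x,y$; for even $\theta$ this reads $\theta([x,y])=[\theta(x),y]=[x,\theta(y)]$. *)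

From HB Require Import structures.
From mathcomp Require Import all_boot all_order all_algebra.
Set Implicit Arguments.
Unset Strict Implicit.
Unset Printing Implicit Defensive.
Import GRing.Theory.
Local Open Scope ring_scope.

Definition bicharacter (G : zmodType) (K : fieldType) (eps : G -> G -> K) : Prop :=
  [/\ forall a b, eps a b != 0,
      forall a b, eps a b * eps b a = 1,
      forall a b c, eps a (b + c) = eps a b * eps a c &
      forall a b c, eps (a + b) c = eps a c * eps b c].

(* V is Gamma-graded: V = (+)_{g in Gamma} Vg g, with each Vg g a subspace. *)
Definition graded (G : zmodType) (K : fieldType) (V : lmodType K)
    (Vg : G -> {pred V}) : Prop :=
  [/\ forall g, 0 \in Vg g,
      forall g (k : K) (x y : V), x \in Vg g -> y \in Vg g -> k *: x + y \in Vg g,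
      forall v : V, exists (s : seq G) (x : G -> V),
          [/\ uniq s, forall g, x g \in Vg g & v = \sum_(g <- s) x g] &
      forall (s : seq G) (x : G -> V), uniq s -> (forall g, x g \in Vg g) ->
          \sum_(g <- s) x g = 0 -> forall g, g \in s -> x g = 0].

Definition linear_map (K : fieldType) (V : lmodType K) (f : V -> V) : Prop :=
  forall (k : K) (x y : V), f (k *: x + y) = k *: f x + f y.

Definition bilinear_map (K : fieldType) (V : lmodType K) (br : V -> V -> V) : Prop :=
  forall z : V, linear_map (br z) /\ linear_map (fun x => br x z).

Definition even_map (G : zmodType) (K : fieldType) (V : lmodType K)
    (Vg : G -> {pred V}) (f : V -> V) : Prop :=
  forall g x, x \in Vg g -> f x \in Vg g.

Definition even_bracket (G : zmodType) (K : fieldType) (V : lmodType K)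
    (Vg : G -> {pred V}) (br : V -> V -> V) : Prop :=
  forall a b x y, x \in Vg a -> y \in Vg b -> br x y \in Vg (a + b).

Definition colorHomLie (G : zmodType) (K : fieldType) (V : lmodType K)
    (Vg : G -> {pred V}) (eps : G -> G -> K) (br : V -> V -> V) (alpha : V -> V)
    : Prop :=
  [/\ graded Vg /\ bicharacter eps,
      bilinear_map br /\ even_bracket Vg br,
      linear_map alpha /\ even_map Vg alpha,
      forall a b x y, x \in Vg a -> y \in Vg b -> br x y = - (eps a b *: br y x) &
      forall a b c x y z, x \in Vg a -> y \in Vg b -> z \in Vg c ->
        eps c a *: br (alpha x) (br y z) + eps a b *: br (alpha y) (br z x)
          + eps b c *: br (alpha z) (br x y) = 0].

Definition even_centroid (G : zmodType) (K : fieldType) (V : lmodType K)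
    (Vg : G -> {pred V}) (br : V -> V -> V) (theta : V -> V) : Prop :=
  [/\ linear_map theta, even_map Vg theta &
      forall a b x y, x \in Vg a -> y \in Vg b ->
        theta (br x y) = br (theta x) y /\ br (theta x) y = br x (theta y)].

Definition bracket1 (V : Type) (br : V -> V -> V) (theta : V -> V) : V -> V -> V :=
  fun x y => br (theta x) y.

Definition bracket2 (V : Type) (br : V -> V -> V) (theta : V -> V) : V -> V -> V :=
  fun x y => br (theta x) (theta y).

From HB Require Import structures.
From mathcomp Require Import all_boot all_order all_algebra.
Set Implicit Arguments.
Unset Strict Implicit.
Unset Printing Implicit Defensive.
Import GRing.Theory.
Local Open Scope ring_scope.

(* An even centroid element theta can be pulled out of any bracket of
   homogeneous elements.  Hence, for every twist considered, each term
   [al' x, [y, z]'] of the new Jacobi sum is theta^k applied to the matching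
   term of an old Jacobi sum, and linearity of theta^k transports the
   identity.  The only twist where this is not immediate is alpha \o theta:
   there the Jacobi identity at (theta x, y, z), compared with theta applied
   to the one at (x, y, z), shows [alpha (theta x), [y, z]] =
   theta [alpha x, [y, z]], because eps is nowhere zero. *)

Section LinearMap.
Variables (K : fieldType) (V : lmodType K) (f : V -> V).
Hypothesis f_lin : linear_map f.

Lemma linear_mapD u v : f (u + v) = f u + f v.
Proof. by rewrite -[u in LHS]scale1r f_lin scale1r. Qed.

Lemma linear_map0 : f 0 = 0.
Proof. by apply: (addrI (f 0)); rewrite -linear_mapD !addr0. Qed.

Lemma linear_mapZ k u : f (k *: u) = k *: f u.
Proof. by rewrite -[k *: u]addr0 f_lin linear_map0 addr0. Qed.

Lemma linear_mapN u : f (- u) = - f u.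
Proof. by rewrite -scaleN1r linear_mapZ scaleN1r. Qed.

End LinearMap.

Lemma linear_map_comp (K : fieldType) (V : lmodType K) (f g : V -> V) :
  linear_map f -> linear_map g -> linear_map (f \o g).
Proof. by move=> f_lin g_lin k u v; rewrite /= g_lin f_lin. Qed.

Lemma even_map_comp (G : zmodType) (K : fieldType) (V : lmodType K)
    (Vg : G -> {pred V}) (f g : V -> V) :
  even_map Vg f -> even_map Vg g -> even_map Vg (f \o g).
Proof. by move=> f_even g_even d u u_d; apply/f_even/g_even. Qed.

Section Grading.
Variables (G : zmodType) (K : fieldType) (V : lmodType K) (Vg : G -> {pred V}).
Variable eps : G -> G -> K.

Definition homogeneous (u : V) : Prop := exists d, u \in Vg d.

Definition eps_skew (br : V -> V -> V) : Prop :=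
  forall a b x y, x \in Vg a -> y \in Vg b -> br x y = - (eps a b *: br y x).

Definition hom_jacobi (br : V -> V -> V) (al : V -> V) : Prop :=
  forall a b c x y z, x \in Vg a -> y \in Vg b -> z \in Vg c ->
    eps c a *: br (al x) (br y z) + eps a b *: br (al y) (br z x)
      + eps b c *: br (al z) (br x y) = 0.

Lemma hom_jacobi_transfer (br br' : V -> V -> V) (al al' T : V -> V) :
  linear_map T ->
  (forall x y z, homogeneous x -> homogeneous y -> homogeneous z ->
     br' (al' x) (br' y z) = T (br (al x) (br y z))) ->
  hom_jacobi br al -> hom_jacobi br' al'.
Proof.
move=> T_lin term_eq jac a b c x y z x_a y_b z_c.
have [hx hy hz] : [/\ homogeneous x, homogeneous y & homogeneous z].
  by split; [exists a | exists b | exists c].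
rewrite !term_eq // -!(linear_mapZ T_lin) -!(linear_mapD T_lin).
by rewrite (jac _ _ _ _ _ _ x_a y_b z_c) (linear_map0 T_lin).
Qed.

End Grading.

Section Centroid.
Variables (G : zmodType) (K : fieldType) (V : lmodType K) (Vg : G -> {pred V}).
Variables (br : V -> V -> V) (theta : V -> V).
Hypothesis br_even : even_bracket Vg br.
Hypothesis centroid : even_centroid Vg br theta.

Let theta_lin : linear_map theta. Proof. by case: centroid. Qed.
Let theta_even : even_map Vg theta. Proof. by case: centroid. Qed.

Lemma homogeneous_br u v :
  homogeneous Vg u -> homogeneous Vg v -> homogeneous Vg (br u v).
Proof. by move=> [a u_a] [b v_b]; exists (a + b); apply: br_even. Qed.

Lemma homogeneous_even_map (f : V -> V) u :
  even_map Vg f -> homogeneous Vg u -> homogeneous Vg (f u).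
Proof. by move=> f_even [a u_a]; exists a; apply: f_even. Qed.

Local Hint Resolve homogeneous_br homogeneous_even_map : core.

Lemma centroid_brl u v :
  homogeneous Vg u -> homogeneous Vg v -> br (theta u) v = theta (br u v).
Proof.
by case: centroid => _ _ th_br [a u_a] [b v_b]; case: (th_br a b u v u_a v_b).
Qed.

Lemma centroid_brr u v :
  homogeneous Vg u -> homogeneous Vg v -> br u (theta v) = theta (br u v).
Proof.
by case: centroid => _ _ th_br [a u_a] [b v_b]; case: (th_br a b u v u_a v_b) => -> ->.
Qed.

Lemma bilinear_bracket1 : bilinear_map br -> bilinear_map (bracket1 br theta).
Proof.
move=> br_bil z; split=> k u v; rewrite /bracket1; first by case: (br_bil (theta z)).
by rewrite theta_lin; case: (br_bil z).
Qed.

Lemma bilinear_bracket2 : bilinear_map br -> bilinear_map (bracket2 br theta).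
Proof.
by move=> br_bil z; split=> k u v; rewrite /bracket2 theta_lin; case: (br_bil (theta z)).
Qed.

Lemma even_bracket1 : even_bracket Vg (bracket1 br theta).
Proof. by move=> a b x y x_a y_b; apply/br_even/y_b/theta_even. Qed.

Lemma even_bracket2 : even_bracket Vg (bracket2 br theta).
Proof. by move=> a b x y x_a y_b; apply/br_even; apply: theta_even. Qed.

Variable eps : G -> G -> K.

Lemma eps_skew_bracket1 : eps_skew Vg eps br -> eps_skew Vg eps (bracket1 br theta).
Proof.
move=> br_skew a b x y x_a y_b.
have [hx hy] : homogeneous Vg x /\ homogeneous Vg y by split; [exists a | exists b].
rewrite /bracket1 !centroid_brl // (br_skew _ _ _ _ x_a y_b).
by rewrite (linear_mapN theta_lin) (linear_mapZ theta_lin).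
Qed.

Lemma eps_skew_bracket2 : eps_skew Vg eps br -> eps_skew Vg eps (bracket2 br theta).
Proof. by move=> br_skew a b x y x_a y_b; apply/br_skew; apply: theta_even. Qed.

Section Twist.
Variable al : V -> V.
Hypothesis al_even : even_map Vg al.

Lemma hom_jacobi_bracket1 :
  hom_jacobi Vg eps br al -> hom_jacobi Vg eps (bracket1 br theta) al.
Proof.
apply: (hom_jacobi_transfer (T := theta \o theta)); first exact: linear_map_comp.
by move=> x y z hx hy hz; rewrite /bracket1 /= !centroid_brl ?centroid_brr; auto.
Qed.

Lemma hom_jacobi_bracket2 :
  hom_jacobi Vg eps br al -> hom_jacobi Vg eps (bracket2 br theta) al.
Proof.
apply: (hom_jacobi_transfer (T := theta \o theta \o (theta \o theta))).
  by do 3!apply: linear_map_comp.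
by move=> x y z hx hy hz; rewrite /bracket2 /= !centroid_brl ?centroid_brr; auto.
Qed.

Lemma colorHomLie_twists :
  graded Vg /\ bicharacter eps -> bilinear_map br -> eps_skew Vg eps br ->
  linear_map al -> hom_jacobi Vg eps br al ->
  [/\ colorHomLie Vg eps br al, colorHomLie Vg eps (bracket1 br theta) al
    & colorHomLie Vg eps (bracket2 br theta) al].
Proof.
move=> gr_bi br_bil br_skew al_lin jac.
split; split=> //.
- by split; [exact: bilinear_bracket1 | exact: even_bracket1].
- exact: eps_skew_bracket1.
- exact: hom_jacobi_bracket1.
- by split; [exact: bilinear_bracket2 | exact: even_bracket2].
- exact: eps_skew_bracket2.
- exact: hom_jacobi_bracket2.
Qed.

End Twist.

Section Alpha.
Variable alpha : V -> V.
Hypotheses (alpha_even : even_map Vg alpha) (jac : hom_jacobi Vg eps br alpha).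

Lemma hom_jacobi_theta_alpha : hom_jacobi Vg eps br (theta \o alpha).
Proof.
apply: (hom_jacobi_transfer theta_lin _ jac) => x y z hx hy hz.
by rewrite /= centroid_brl; auto.
Qed.

Hypothesis eps_neq0 : forall a b, eps a b != 0.

Lemma br_alpha_theta x y z :
  homogeneous Vg x -> homogeneous Vg y -> homogeneous Vg z ->
  br (alpha (theta x)) (br y z) = theta (br (alpha x) (br y z)).
Proof.
move=> [a x_a] [b y_b] [c z_c].
have [hx hy hz] : [/\ homogeneous Vg x, homogeneous Vg y & homogeneous Vg z].
  by split; [exists a | exists b | exists c].
have jac_theta_x := jac (theta_even x_a) y_b z_c.
have theta_jac : theta (eps c a *: br (alpha x) (br y z)
    + eps a b *: br (alpha y) (br z x) + eps b c *: br (alpha z) (br x y)) = 0.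
  by rewrite (jac x_a y_b z_c) (linear_map0 theta_lin).
rewrite !(linear_mapD theta_lin) !(linear_mapZ theta_lin) in theta_jac.
rewrite centroid_brl ?centroid_brr in jac_theta_x; auto.
apply: (scalerI (eps_neq0 c a)); apply: (addIr (eps a b *: theta (br (alpha y) (br z x))
    + eps b c *: theta (br (alpha z) (br x y)))).
by rewrite !addrA jac_theta_x theta_jac.
Qed.

Lemma hom_jacobi_alpha_theta : hom_jacobi Vg eps br (alpha \o theta).
Proof. exact: (hom_jacobi_transfer theta_lin br_alpha_theta jac). Qed.

End Alpha.

End Centroid.

Theorem mainTheorem3 (K : fieldType) (G : zmodType) (V : lmodType K)
    (Vg : G -> {pred V}) (eps : G -> G -> K) (br : V -> V -> V)
    (alpha theta : V -> V) :
  [pchar K] =i pred0 ->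
  colorHomLie Vg eps br alpha ->
  even_centroid Vg br theta ->
  (* (i) *)
  (colorHomLie Vg eps br (theta \o alpha)
   /\ colorHomLie Vg eps (bracket1 br theta) (theta \o alpha)
   /\ colorHomLie Vg eps (bracket2 br theta) (theta \o alpha))
  /\
  (* (ii) *)
  (colorHomLie Vg eps br (alpha \o theta)
   /\ colorHomLie Vg eps (bracket1 br theta) (alpha \o theta)
   /\ colorHomLie Vg eps (bracket2 br theta) (alpha \o theta)).
Proof.
move=> _ hom_lie centroid.
have [gr_bi [br_bil br_even] [alpha_lin alpha_even] br_skew jac] := hom_lie.
have [theta_lin theta_even _] := centroid.
have [_ [eps_neq0 _ _ _]] := gr_bi.
have [th_al th_al1 th_al2] := colorHomLie_twists br_even centroid
  (even_map_comp theta_even alpha_even) gr_bi br_bil br_skew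
  (linear_map_comp theta_lin alpha_lin)
  (hom_jacobi_theta_alpha br_even centroid alpha_even jac).
have [al_th al_th1 al_th2] := colorHomLie_twists br_even centroid
  (even_map_comp alpha_even theta_even) gr_bi br_bil br_skew
  (linear_map_comp alpha_lin theta_lin)
  (hom_jacobi_alpha_theta br_even centroid alpha_even jac eps_neq0).
by split; split.
Qed.
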